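(* Let $n\ge4$ and let $\lambda=(a_1,\dots,a_n)$ (usual coordinates) be a dominant weight of $SL(n)$ all of whose coordinates $a_i$ are non-integers. If the collection $a_1,\dots,a_n$ takes at least three distinct values, then $M(\lambda)$ contains a point three of whose coordinates are equal to $\alpha+1,\alpha,\alpha-1$ for some $\alpha\in\mathbb R$.
   Context: Setup for $SL(n)$: $\varepsilon_1,\dots,\varepsilon_n$ is the standard basis of $\mathbb Q^n$, $e_i=\varepsilon_i-\frac1n(1,\dots,1)$; the character lattice $\mathfrak X(T)$ of the diagonal torus is identified with the $\mathbb Z$-span of $e_1,\dots,e_n$ inside $\{y\in\mathbb Q^n:\sum y_i=0\}$ (the $y_i$ are the ''usual coordinates''). $W=S_n$ acts by permuting coordinates. A weight is dominant if $y_1\ge y_2\ge\dots\ge y_n$. The root lattice is $\Phi=\{\sum a_ie_i\mid a_i\in\mathbb Z,\ \sum a_i\equiv0\pmod n\}$. For a dominant weight $\lambda$, $M(\lambda)=\mathrm{conv}\{w\lambda\mid w\in W\}\cap(\lambda+\Phi)$. *)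

(* Weights of SL(n) as row vectors in Q^n ("usual coordinates"). *)
From HB Require Import structures.
From mathcomp Require Import all_boot all_order all_algebra all_fingroup.
Set Implicit Arguments. Unset Strict Implicit. Unset Printing Implicit Defensive.
Import Order.TTheory GRing.Theory Num.Theory.
Local Open Scope ring_scope.

Definition e_vec (n : nat) (i : 'I_n) : 'rV[rat]_n :=
  \row_j ((i == j)%:R - (n%:R)^-1).

Definition char_lattice (n : nat) (y : 'rV[rat]_n) : Prop :=
  exists a : 'I_n -> int, y = \sum_i (a i)%:~R *: e_vec i.

Definition root_lattice (n : nat) (y : 'rV[rat]_n) : Prop :=
  exists a : 'I_n -> int, (n%:Z %| \sum_i a i)%Z /\ y = \sum_i (a i)%:~R *: e_vec i.

Definition dominant (n : nat) (y : 'rV[rat]_n) : Prop :=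
  forall i j : 'I_n, (i <= j)%N -> y 0 j <= y 0 i.

Definition Wact (n : nat) (s : 'S_n) (y : 'rV[rat]_n) : 'rV[rat]_n :=
  \row_j y 0 (s^-1 j)%g.

Definition in_conv_orbit (n : nat) (lam x : 'rV[rat]_n) : Prop :=
  exists t : 'S_n -> rat, (forall s, 0 <= t s) /\ \sum_s t s = 1 /\
    x = \sum_s t s *: Wact s lam.

Definition M_set (n : nat) (lam x : 'rV[rat]_n) : Prop :=
  in_conv_orbit lam x /\ root_lattice (x - lam).

(* The coordinates of lam differ by integers.  We work with admissible vectors:
   convex combinations of permutations of lam whose coordinates are congruent
   to those of lam modulo 1; they all lie in M(lam).  The only move is a
   transfer, replacing x_p, x_q by c, x_p + x_q - c with c between them and
   congruent to x_p: it is the mixture (1 - s) x + s (x o (p q)).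
   Two transfers turn three distinct values with sum 3A into A + 1, A, A - 1.
   For the general case a fourth coordinate w corrects the sum modulo 3: if one
   of the three values is at distance >= 2 from x_w, a transfer with w shifts
   it by any residue; otherwise the values are x_w - 1, x_w, x_w + 1.
   The file develops congruence modulo 1, then the hull and transfers, then
   the ladder lemmas, and derives the theorem from them. *)
From HB Require Import structures.
From mathcomp Require Import all_boot all_order all_algebra all_fingroup.
From mathcomp Require Import ring lra.
Import Order.TTheory GRing.Theory Num.Theory.
Set Implicit Arguments. Unset Strict Implicit. Unset Printing Implicit Defensive.
Local Open Scope ring_scope.

Definition cong1 (a b : rat) : Prop := a - b \is a Num.int.

Lemma cong1_refl (a : rat) : cong1 a a.
Proof. by rewrite /cong1 subrr rpred0. Qed.

Lemma cong1_sym (a b : rat) : cong1 a b -> cong1 b a.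
Proof. by rewrite /cong1 -opprB rpredN. Qed.

Lemma cong1_trans (a b c : rat) : cong1 a b -> cong1 b c -> cong1 a c.
Proof.
rewrite /cong1 => ab bc.
have -> : a - c = (a - b) + (b - c) by ring.
exact: rpredD.
Qed.

Lemma cong1_shift (a d : rat) : d \is a Num.int -> cong1 (a + d) a.
Proof. by rewrite /cong1 addrAC subrr add0r. Qed.

Lemma cong1_add (a b a' b' : rat) :
  cong1 a a' -> cong1 b b' -> cong1 (a + b) (a' + b').
Proof.
rewrite /cong1 => aa bb.
have -> : a + b - (a' + b') = (a - a') + (b - b') by ring.
exact: rpredD.
Qed.

Lemma cong1_gap (a b : rat) : cong1 a b -> b < a -> b + 1 <= a.
Proof.
move=> /intrP[z az] ba.
have z_pos : (0 < z)%R by rewrite -(ltr0z rat) -az subr_gt0.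
have : (1 : rat) <= z%:~R by rewrite ler1z.
by rewrite -az; lra.
Qed.

Lemma div3_rat (d : rat) : d \is a Num.int ->
  exists m : rat, [/\ m \is a Num.int, 0 <= d - 3 * m & d - 3 * m <= 2].
Proof.
move=> dZ; set m : rat := (Num.floor (d / 3))%:~R; exists m.
have /andP[lo hi] := floor_itv (d / 3); rewrite intrD rmorph1 -/m in hi.
have eZ : d - 3 * m \is a Num.int by rewrite rpredB ?rpredM ?natr_int ?intr_int.
have lt3 : d - 3 * m < 3 by lra.
have := @cong1_gap 3 (d - 3 * m) (rpredB (natr_int _ 3) eZ) lt3.
by split; [exact: intr_int | lra..].
Qed.

Definition between (a b c : rat) : bool := (a <= c <= b) || (b <= c <= a).

Definition far_from (v a : rat) : bool := (v + 2 <= a) || (a <= v - 2).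

Lemma near_coset (v a : rat) : cong1 a v -> ~~ far_from v a ->
  [\/ a = v - 1, a = v | a = v + 1].
Proof.
rewrite /far_from negb_or -!ltNge => av /andP[hi lo].
have two_int : (2 : rat) \is a Num.int by exact: natr_int.
have mtwo_int : (- 2 : rat) \is a Num.int by rewrite rpredN.
case: (ltgtP a v) => [lt|gt|->]; [constructor 1 | constructor 3 | by constructor 2].
- have := cong1_gap (cong1_sym av) lt.
  have := cong1_gap (cong1_trans av (cong1_sym (cong1_shift v mtwo_int))) lo.
  lra.
- have := cong1_gap av gt.
  have := cong1_gap (cong1_trans (cong1_shift v two_int) (cong1_sym av)) hi.
  lra.
Qed.

Lemma distinct_near_sum (v a b c : rat) :
  a != b -> b != c -> a != c ->
  [\/ a = v - 1, a = v | a = v + 1] -> [\/ b = v - 1, b = v | b = v + 1] ->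
  [\/ c = v - 1, c = v | c = v + 1] -> a + b + c = 3 * v.
Proof.
move=> + + + ha hb hc.
by case: ha => ->; case: hb => ->; case: hc => ->; rewrite ?eqxx // => *; lra.
Qed.

Lemma adjust_mod3 (a v s : rat) :
  cong1 a v -> far_from v a -> cong1 s (3 * v) ->
  exists c A, [/\ between a v c, cong1 c a, cong1 A v & s - a + c = 3 * A].
Proof.
move=> av /orP[above | below] sv.
- have [m [mZ e0 e2]] := div3_rat sv.
  exists (a - (s - 3 * v - 3 * m)), (v + m); split.
  + by rewrite /between; apply/orP; right; apply/andP; split; lra.
  + by apply: cong1_shift; rewrite rpredN rpredB ?rpredM ?natr_int.
  + exact: cong1_shift.
  + ring.
- have nsv : - (s - 3 * v) \is a Num.int by rewrite rpredN.
  have [m [mZ e0 e2]] := div3_rat nsv.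
  exists (a + (- (s - 3 * v) - 3 * m)), (v - m); split.
  + by rewrite /between; apply/orP; left; apply/andP; split; lra.
  + by apply: cong1_shift; rewrite rpredB ?rpredN ?rpredM ?natr_int.
  + by apply: cong1_shift; rewrite rpredN.
  + ring.
Qed.

Lemma lattice_coord n (a : 'I_n -> int) j :
  (\sum_i (a i)%:~R *: e_vec i) 0 j = (a j)%:~R - (\sum_i (a i)%:~R) / n%:R.
Proof.
rewrite summxE.
under eq_bigr do rewrite !mxE mulrBr.
rewrite big_split /= sumrN mulr_suml; congr (_ - _).
rewrite (bigD1 j) //= eqxx mulr1 big1 ?addr0 // => i /negbTE ->.
by rewrite mulr0.
Qed.

Lemma char_lattice_cong n (lam : 'rV[rat]_n) i j :
  char_lattice lam -> cong1 (lam 0 i) (lam 0 j).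
Proof.
case=> a ->; rewrite /cong1 !lattice_coord opprB addrA subrK.
by rewrite rpredB ?intr_int.
Qed.

Definition hull n (lam x : 'rV[rat]_n) : Prop :=
  exists t : 'S_n -> rat, [/\ forall s, 0 <= t s, \sum_s t s = 1 &
    forall j, x 0 j = \sum_s t s * lam 0 ((s^-1)%g j)].

Lemma hull_conv_orbit n (lam x : 'rV[rat]_n) : hull lam x -> in_conv_orbit lam x.
Proof.
case=> t [t_ge0 t_sum xE]; exists t; split=> //; split=> //.
by apply/rowP=> j; rewrite summxE xE; apply: eq_bigr => s _; rewrite !mxE.
Qed.

Lemma hull_refl n (lam : 'rV[rat]_n) : hull lam lam.
Proof.
exists (fun s => (s == 1%g)%:R); split.
- by move=> s; case: (s == 1%g).
- by rewrite (bigD1 1%g) //= eqxx big1 ?addr0 // => s /negbTE ->.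
- move=> j; rewrite (bigD1 1%g) //= eqxx big1 ?addr0 ?invg1 ?perm1 ?mul1r //.
  by move=> s /negbTE ->; rewrite mul0r.
Qed.

(* Permuting coordinates preserves the coordinate sum. *)
Lemma hull_sum n (lam x : 'rV[rat]_n) :
  hull lam x -> \sum_j x 0 j = \sum_j lam 0 j.
Proof.
case=> t [_ t_sum xE].
under eq_bigr do rewrite xE.
rewrite exchange_big /=.
have perm_sum (s : 'S_n) : \sum_j lam 0 ((s^-1)%g j) = \sum_j lam 0 j.
  rewrite (reindex_inj (@perm_inj _ s)) /=.
  by apply: eq_bigr => j _; rewrite -permM mulgV perm1.
under eq_bigr do rewrite -mulr_sumr perm_sum.
by rewrite -mulr_suml t_sum mul1r.
Qed.

Lemma hull_swap_mix n (lam x : 'rV[rat]_n) p q s :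
  hull lam x -> 0 <= s <= 1 ->
  hull lam (\row_j ((1 - s) * x 0 j + s * x 0 (tperm p q j))).
Proof.
case=> t [t_ge0 t_sum xE] /andP[s_ge0 s_le1].
pose tau := tperm p q.
have reindex (F : 'S_n -> rat) : \sum_u F (u * tau)%g = \sum_u F u.
  by rewrite [RHS](reindex_inj (mulIg tau)).
exists (fun u => (1 - s) * t u + s * t (u * tau)%g); split.
- by move=> u; rewrite addr_ge0 ?mulr_ge0 ?subr_ge0.
- by rewrite big_split /= -!mulr_sumr (reindex t) t_sum; ring.
move=> j; rewrite mxE.
under eq_bigr do rewrite mulrDl -!mulrA.
rewrite big_split /= -!mulr_sumr -xE; congr (_ + s * _).
rewrite xE -(reindex (fun u => t u * lam 0 ((u^-1)%g (tau j)))).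
apply: eq_bigr => u _; congr (_ * lam 0 _).
by rewrite invMg permM tpermV tpermK.
Qed.

Definition transfer n (x : 'rV[rat]_n) (p q : 'I_n) (c : rat) : 'rV[rat]_n :=
  \row_j (if j == p then c else if j == q then x 0 p + x 0 q - c else x 0 j).

Section TransferCoordinates.
Variables (n : nat) (x : 'rV[rat]_n) (p q : 'I_n) (c : rat).

Lemma transfer_p : transfer x p q c 0 p = c.
Proof. by rewrite mxE eqxx. Qed.

Lemma transfer_q : p != q -> transfer x p q c 0 q = x 0 p + x 0 q - c.
Proof. by move=> pq; rewrite mxE eq_sym (negbTE pq) eqxx. Qed.

Lemma transfer_other j : j != p -> j != q -> transfer x p q c 0 j = x 0 j.
Proof. by move=> jp jq; rewrite mxE (negbTE jp) (negbTE jq). Qed.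

End TransferCoordinates.

(* A transfer is a swap-mixture, so it stays in the hull. *)
Lemma hull_transfer n (lam x : 'rV[rat]_n) p q c :
  hull lam x -> p != q -> between (x 0 p) (x 0 q) c -> hull lam (transfer x p q c).
Proof.
move=> hx pq hc.
have [xpq | xpq] := eqVneq (x 0 p) (x 0 q).
  have cp : c = x 0 p by move: hc; rewrite /between -xpq orbb => /andP[? ?]; lra.
  suff -> : transfer x p q c = x by [].
  apply/rowP=> j; rewrite mxE; case: eqP => [->|_] //.
  by case: eqP => [->|_] //; rewrite cp xpq; ring.
set s := (x 0 p - c) / (x 0 p - x 0 q).
have sE : s * (x 0 p - x 0 q) = x 0 p - c by rewrite divfK // subr_eq0.
clearbody s.
have s01 : 0 <= s <= 1.
  case/orP: hc => /andP[? ?]; case: (ltgtP (x 0 p) (x 0 q)) xpq => // ? _;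
    by apply/andP; split; nra.
suff -> : transfer x p q c = \row_j ((1 - s) * x 0 j + s * x 0 (tperm p q j)).
  exact: hull_swap_mix.
apply/rowP=> j; rewrite !mxE.
have [->|jp] := eqVneq j p; first by rewrite tpermL; nra.
have [->|jq] := eqVneq j q; first by rewrite tpermR; nra.
by rewrite tpermD; [ring | rewrite eq_sym | rewrite eq_sym].
Qed.

Definition admissible n (lam x : 'rV[rat]_n) : Prop :=
  hull lam x /\ forall i, cong1 (x 0 i) (lam 0 i).

Lemma admissible_refl n (lam : 'rV[rat]_n) : admissible lam lam.
Proof. by split=> [|i]; [exact: hull_refl | exact: cong1_refl]. Qed.

(* Admissible vectors lie in M(lam): the integral coordinate differences sum
   to zero, hence give an element of the root lattice. *)
Lemma admissible_M_set n (lam x : 'rV[rat]_n) : admissible lam x -> M_set lam x.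
Proof.
case=> hx xlam; split; first exact: hull_conv_orbit.
pose a i := Num.floor (x 0 i - lam 0 i).
have aE i : (a i)%:~R = x 0 i - lam 0 i by apply/eqP; rewrite -intrEfloor; exact: xlam.
have a_sum0 : \sum_i a i = 0.
  apply/eqP; rewrite -(intr_eq0 rat) rmorph_sum /=.
  under eq_bigr do rewrite aE.
  by rewrite sumrB (hull_sum hx) subrr.
exists a; split; first by rewrite a_sum0 dvdz0.
apply/rowP=> j; rewrite lattice_coord !mxE -aE.
by rewrite -rmorph_sum /= a_sum0 mul0r subr0.
Qed.

Lemma admissible_transfer n (lam x : 'rV[rat]_n) p q c :
  admissible lam x -> p != q -> between (x 0 p) (x 0 q) c -> cong1 c (x 0 p) ->
  admissible lam (transfer x p q c).
Proof.
case=> hx xlam pq hc cp; split; first exact: hull_transfer.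
move=> j; rewrite mxE; case: eqP => [->|_]; first exact: cong1_trans cp (xlam p).
case: eqP => [->|_]; last exact: xlam.
apply: cong1_trans (xlam q); rewrite /cong1.
have -> : x 0 p + x 0 q - c - x 0 q = - (c - x 0 p) by ring.
by rewrite rpredN.
Qed.

Definition ladder n (x : 'rV[rat]_n) : Prop :=
  exists i j k : 'I_n, [/\ i != j, j != k & i != k] /\
    exists alpha : rat, [/\ x 0 i = alpha + 1, x 0 j = alpha & x 0 k = alpha - 1].

Definition ladder_reachable n (lam : 'rV[rat]_n) : Prop :=
  exists y, admissible lam y /\ ladder y.

Section Ladders.
Variables (n : nat) (lam : 'rV[rat]_n).
Hypothesis lam_char : char_lattice lam.

Lemma admissible_cong x i j : admissible lam x -> cong1 (x 0 i) (x 0 j).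
Proof.
case=> _ xlam; apply: cong1_trans (xlam i) _.
exact: cong1_trans (char_lattice_cong i j lam_char) (cong1_sym (xlam j)).
Qed.

Lemma pair_ladder x p q r A :
  admissible lam x -> p != q -> q != r -> p != r ->
  x 0 r = A - 1 -> x 0 p + x 0 q = 2 * A + 1 -> cong1 (x 0 p) A ->
  ladder_reachable lam.
Proof.
move=> hx pq qr pr xr pq_sum pA.
have hc : between (x 0 p) (x 0 q) (A + 1).
  have [pA' | Ap] := leP (x 0 p) A.
    by apply/orP; left; apply/andP; split; lra.
  have Ap1 := cong1_gap pA Ap.
  by apply/orP; right; apply/andP; split; lra.
exists (transfer x p q (A + 1)); split.
  apply: admissible_transfer => //.
  exact: cong1_trans (cong1_shift A (rpred1 _)) (cong1_sym pA).
exists p, q, r; split=> //; exists A.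
rewrite transfer_p transfer_q // transfer_other 1?eq_sym //.
by split=> //; lra.
Qed.

(* Sorted non-constant triple with sum 3A: the maximum is at least A + 1 and
   the minimum at most A - 1; pulling the minimum up to A - 1 reduces to
   [pair_ladder]. *)
Lemma sorted_triple_ladder x p q r A :
  admissible lam x -> p != q -> q != r -> p != r ->
  x 0 r <= x 0 q -> x 0 q <= x 0 p -> x 0 r < x 0 p ->
  x 0 p + x 0 q + x 0 r = 3 * A -> cong1 (x 0 p) A -> ladder_reachable lam.
Proof.
move=> hx pq qr pr rq qp rp sum3 pA.
have rA : cong1 (x 0 r) A := cong1_trans (admissible_cong r p hx) pA.
have Ap : A + 1 <= x 0 p by apply: cong1_gap pA _; lra.
have rA1 : x 0 r + 1 <= A by apply: cong1_gap (cong1_sym rA) _; lra.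
have rp' : r != p by rewrite eq_sym.
have hy : admissible lam (transfer x r p (A - 1)).
  apply: admissible_transfer => //; first by apply/orP; left; apply/andP; split; lra.
  by apply: cong1_trans (cong1_sym rA); apply: cong1_shift; rewrite rpredN.
apply: (pair_ladder (p := p) (q := q) (r := r) (A := A) hy) => //.
- exact: transfer_p.
- by rewrite transfer_q // transfer_other; [lra | | rewrite eq_sym].
- rewrite transfer_q // /cong1.
  have -> : x 0 r + x 0 p - (A - 1) - A = (x 0 r - A) + (x 0 p - A) + 1 by ring.
  exact: rpredD (rpredD rA pA) (rpred1 _).
Qed.

Lemma triple_ladder x p q r A :
  admissible lam x -> p != q -> q != r -> p != r -> x 0 q != x 0 r ->
  x 0 p + x 0 q + x 0 r = 3 * A -> cong1 (x 0 p) A -> ladder_reachable lam.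
Proof.
move=> hx pq qr pr qr_val sum3 pA.
have cA t : cong1 (x 0 t) A := cong1_trans (admissible_cong t p hx) pA.
wlog qr_lt : q r pq qr pr qr_val sum3 / x 0 q < x 0 r.
  move=> sorted; case: (ltgtP (x 0 q) (x 0 r)) => [qr_lt | rq_lt | e].
  - by apply: (sorted q r).
  - by apply: (sorted r q) => //; [rewrite eq_sym | rewrite eq_sym | lra].
  - by rewrite e eqxx in qr_val.
have [rp | pr_lt] := leP (x 0 r) (x 0 p).
  apply: (sorted_triple_ladder (p := p) (q := r) (r := q) (A := A) hx) => //;
  (by rewrite eq_sym) || lra.
have [qp | pq_lt] := leP (x 0 q) (x 0 p).
  apply: (sorted_triple_ladder (p := r) (q := p) (r := q) (A := A) hx) => //;
  (by rewrite eq_sym) || lra.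
apply: (sorted_triple_ladder (p := r) (q := q) (r := p) (A := A) hx) => //;
  (by rewrite eq_sym) || lra.
Qed.

Lemma shifted_triple_ladder x p q r w c A :
  admissible lam x -> p != q -> q != r -> p != r -> w != p -> w != q -> w != r ->
  x 0 q != x 0 r -> between (x 0 p) (x 0 w) c -> cong1 c (x 0 p) ->
  c + x 0 q + x 0 r = 3 * A -> cong1 c A -> ladder_reachable lam.
Proof.
move=> hx pq qr pr wp wq wr qr_val hc cp sum3 cA.
have pw : p != w by rewrite eq_sym.
have yq : transfer x p w c 0 q = x 0 q.
  by rewrite transfer_other // eq_sym.
have yr : transfer x p w c 0 r = x 0 r.
  by rewrite transfer_other // eq_sym.
apply: (triple_ladder (x := transfer x p w c) (p := p) (q := q) (r := r) (A := A)) => //.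
- exact: admissible_transfer.
- by rewrite yq yr.
- by rewrite transfer_p yq yr.
- by rewrite transfer_p.
Qed.

Lemma far_triple_ladder x p q r w :
  admissible lam x -> w != p -> w != q -> w != r ->
  x 0 p != x 0 q -> x 0 q != x 0 r -> x 0 p != x 0 r ->
  far_from (x 0 w) (x 0 p) -> ladder_reachable lam.
Proof.
move=> hx wp wq wr npq nqr npr far.
have pq : p != q by apply: contraNneq npq => ->.
have qr : q != r by apply: contraNneq nqr => ->.
have pr : p != r by apply: contraNneq npr => ->.
have sum_cong : cong1 (x 0 p + x 0 q + x 0 r) (3 * x 0 w).
  have -> : 3 * x 0 w = x 0 w + x 0 w + x 0 w by ring.
  by apply: cong1_add; [apply: cong1_add |]; exact: admissible_cong.
have [c [A [hc cp Aw sumE]]] := adjust_mod3 (admissible_cong p w hx) far sum_cong.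
apply: (shifted_triple_ladder (p := p) (q := q) (r := r) (w := w) (c := c) (A := A) hx)
  => //; first lra.
exact: cong1_trans cp (cong1_trans (admissible_cong p w hx) (cong1_sym Aw)).
Qed.

End Ladders.

Lemma fourth_index n (i j k : 'I_n) :
  (3 < n)%N -> exists w : 'I_n, [&& w != i, w != j & w != k].
Proof.
move=> n_gt3.
have /properP[_ [w _]] : [set i; j; k] \proper [set: 'I_n].
  rewrite properEcard subsetT cardsT card_ord /=.
  apply: leq_ltn_trans n_gt3.
  by rewrite -setUA !cardsU1 cards1; case: (_ \notin _); case: (_ \notin _).
by rewrite !inE !negb_or -andbA; exists w.
Qed.

Theorem lemma9 (n : nat) (lam : 'rV[rat]_n) :
  (4 <= n)%N ->
  char_lattice lam ->
  dominant lam ->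
  (forall i : 'I_n, lam 0 i \isn't a Num.int) ->
  (exists i j k : 'I_n,
      [/\ lam 0 i != lam 0 j, lam 0 j != lam 0 k & lam 0 i != lam 0 k]) ->
  exists x : 'rV[rat]_n, M_set lam x /\
    exists i j k : 'I_n, [/\ i != j, j != k & i != k] /\
      exists alpha : rat,
        [/\ x 0 i = alpha + 1, x 0 j = alpha & x 0 k = alpha - 1].
Proof.
move=> n_ge4 lam_char _ _ [i [j [k [nij njk nik]]]].
suff [y [hy y_ladder]] : ladder_reachable lam.
  by exists y; split; [exact: admissible_M_set | exact: y_ladder].
have [w /and3P[wi wj wk]] := fourth_index i j k n_ge4.
have hlam := admissible_refl lam.
have far p q r : w != p -> w != q -> w != r ->
    lam 0 p != lam 0 q -> lam 0 q != lam 0 r -> lam 0 p != lam 0 r ->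
    far_from (lam 0 w) (lam 0 p) -> ladder_reachable lam.
  exact: (far_triple_ladder lam_char (p := p) (q := q) (r := r) (w := w) hlam).
have [far_i | near_i] := boolP (far_from (lam 0 w) (lam 0 i)).
  exact: (far i j k).
have [far_j | near_j] := boolP (far_from (lam 0 w) (lam 0 j)).
  by apply: (far j i k) => //; rewrite eq_sym.
have [far_k | near_k] := boolP (far_from (lam 0 w) (lam 0 k)).
  by apply: (far k i j) => //; rewrite eq_sym.
(* Otherwise the three values are x_w - 1, x_w, x_w + 1: their sum is 3 x_w. *)
have near u : ~~ far_from (lam 0 w) (lam 0 u) -> _ :=
  near_coset (char_lattice_cong u w lam_char).
apply: (triple_ladder lam_char (p := i) (q := j) (r := k) (A := lam 0 w) hlam) => //.
- by apply: contraNneq nij => ->.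
- by apply: contraNneq njk => ->.
- by apply: contraNneq nik => ->.
- exact: distinct_near_sum (near i near_i) (near j near_j) (near k near_k).
- exact: char_lattice_cong.
Qed.
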